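(* Let $k\in\mathbb{N}$ be even and let $n,m$ be odd integers. Then $K_{k,2}(n,m)=2K_{k,1}\left(\frac{n}{2},\frac{m}{2}\right)$.
   Context: For even $k\in\mathbb{N}$ put $k^*=4k$ if $\gcd(k,6)=2$ and $k^*=36k$ if $6\mid k$. For $a\in\{1,2\}$ and $n,m\in\frac12\mathbb{Z}$ define $$K_{k,a}(n,m)=\sum_{\substack{0\le h<ak\\ \gcd(h,ak)=1}} e^{\frac{2\pi i}{ak}(-nh+mh')},$$ where for each $h$, $h'$ is an integer with $hh'\equiv-1\pmod{k^*}$. *)

From mathcomp Require Import all_boot all_order all_algebra.
From mathcomp Require Import reals trigo.
From mathcomp Require Import complex.
Set Implicit Arguments. Unset Strict Implicit. Unset Printing Implicit Defensive.
Import Order.TTheory GRing.Theory Num.Theory.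
Local Open Scope ring_scope.

Definition kstar (k : nat) : nat :=
  if (6 %| k)%N then (36 * k)%N else (4 * k)%N.

(* h' : an integer with h h' = -1 (mod k^* ); we take the least such
   nonnegative representative (0 if none exists, which never happens
   for h coprime to a*k with k even). *)
Definition hprime (k h : nat) : nat :=
  odflt 0%N (omap (@nat_of_ord _)
    [pick x : 'I_(kstar k) | (kstar k %| h * x + 1)%N]).

Definition ee (R : realType) (x : R) : R[i] :=
  Complex (cos (2 * pi * x)) (sin (2 * pi * x)).

(* K_{k,a}(n,m) for real n, m (the paper uses n, m in (1/2)Z). *)
Definition Kl (R : realType) (k a : nat) (n m : R) : R[i] :=
  \sum_(0 <= h < a * k | coprime h (a * k))
     ee ((- n * h%:R + m * (hprime k h)%:R) / (a * k)%:R).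

From mathcomp Require Import all_boot all_order all_algebra.
From mathcomp Require Import reals trigo.
From mathcomp Require Import complex.
From mathcomp Require Import zify ring.
Set Implicit Arguments.
Unset Strict Implicit.
Import GRing.Theory Num.Theory.
Local Open Scope ring_scope.

(* Split the sum over h < 2k into the terms h and h + k with h < k.  Modulo 2k,
   h' + k is an inverse of -(h + k), because h' and h + k are odd:
   (h + k)(h' + k) = h h' + k h' + k (h + k) = -1 + k + k = -1.  So the
   exponents of the terms h + k and h differ by (m - n)/2 + m t for some integer
   t, an integer since n and m are odd, and both halves of K_{k,2}(n, m) equal
   K_{k,1}(n/2, m/2). *)

Lemma periodicz (U V : zmodType) (f : U -> V) (T : U) :
  periodic f T -> forall (z : int) a, f (a + T *~ z) = f a.
Proof.
move=> fT [] z a; first exact: periodicn.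
by rewrite NegzE mulrNz -[in RHS](subrK (T *+ z.+1) a) periodicn.
Qed.

Lemma ee_addz (R : realType) (x : R) (z : int) : ee (x + z%:~R) = ee x.
Proof.
rewrite /ee; have -> : 2 * pi * (x + z%:~R) = 2 * pi * x + pi *+ 2 *~ z.
  by rewrite -mulrzr -mulr_natl; ring.
by rewrite (periodicz (@cosD2pi R)) (periodicz (@sinD2pi R)).
Qed.

Lemma odd_absz_double (n : int) : odd `|n|%N -> exists q : int, n = 2 * q + 1.
Proof.
have := odd_double_half `|n|%N; rewrite -muln2.
case: n => a /= Ea odd_a.
  by exists a./2%:Z; move: Ea; rewrite odd_a; lia.
exists (- a./2%:Z - 1); move: Ea; rewrite (negbTE odd_a) NegzE; lia.
Qed.

Lemma coprime_double_even (k h : nat) :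
  ~~ odd k -> coprime h (2 * k) = coprime h k.
Proof.
rewrite -dvdn2 => k_even; rewrite coprimeMr andb_idl //.
exact: coprime_dvdr.
Qed.

Lemma coprimeDl_self (k h : nat) : coprime (h + k) k = coprime h k.
Proof. by rewrite /coprime gcdnC gcdnDr gcdnC. Qed.

Lemma dvdn_double_kstar (k : nat) : (2 * k %| kstar k)%N.
Proof. by rewrite /kstar; case: ifP => _; apply/dvdnP; [exists 18 | exists 2]; lia. Qed.

Lemma coprime_kstar (k h : nat) : ~~ odd k -> coprime h (kstar k) = coprime h k.
Proof.
rewrite -dvdn2 /kstar => k_even; case: ifP => k6; rewrite coprimeMr andb_idl //.
  by rewrite (_ : 36 = 6 * 6)%N // coprimeMr andbb; apply: coprime_dvdr.
by rewrite (_ : 4 = 2 * 2)%N // coprimeMr andbb; apply: coprime_dvdr.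
Qed.

Lemma dvdn_kstar_hprime (k h : nat) : (0 < k)%N -> ~~ odd k -> coprime h k ->
  (kstar k %| h * hprime k h + 1)%N.
Proof.
move=> k_gt0 k_even; rewrite -coprime_kstar // /coprime => /eqP hk1.
have kstar_gt0 : (0 < kstar k)%N by rewrite /kstar; case: ifP; lia.
have [a a_lt] := Bezoutl h kstar_gt0; rewrite gcdnC hk1 => Ha.
rewrite /hprime; case: pickP => [x //| no_inverse].
by have := no_inverse (Ordinal a_lt); rewrite /= mulnC addnC Ha.
Qed.

Lemma inverse_addn_self_mod (k h x y : nat) : ~~ odd k -> coprime h k ->
  (2 * k %| h * y + 1)%N -> (2 * k %| (h + k) * x + 1)%N ->
  (x%:Z == y%:Z + k%:Z %[mod (2 * k)%N])%Z.
Proof.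
move=> k_even hk hy hx; have two_k : (2 %| k)%N by rewrite dvdn2.
have h_odd : odd h by rewrite -coprime2n coprime_sym (coprime_dvdr two_k hk).
have x_odd : odd x.
  have := dvdn_trans (dvdn_mulr k (dvdnn 2)) hx.
  by rewrite dvdn2 oddD oddM oddD h_odd (negbTE k_even) addbT negbK.
have kxh : (2 * k %| k * (x + h))%N.
  by rewrite mulnC dvdn_pmul2l ?dvdn2 ?oddD ?x_odd ?h_odd //; lia.
have : ((2 * k)%N%:Z %| (x%:Z - (y%:Z + k%:Z)) * h%:Z)%Z.
  have -> : (x%:Z - (y%:Z + k%:Z)) * h%:Z =
      ((h + k) * x + 1)%N%:Z - (h * y + 1)%N%:Z - (k * (x + h))%N%:Z.
    by rewrite !PoszD !PoszM; ring.
  by rewrite !rpredB.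
rewrite eqz_mod_dvd Gauss_dvdzl // coprimezE /=.
by rewrite coprimeMl coprime2n h_odd coprime_sym.
Qed.

Definition Kl_term (R : realType) (k a : nat) (n m : R) (h : nat) : R[i] :=
  ee ((- n * h%:R + m * (hprime k h)%:R) / (a * k)%:R).

Lemma KlE (R : realType) (k a : nat) (n m : R) :
  Kl k a n m = \sum_(0 <= h < a * k | coprime h (a * k)) Kl_term k a n m h.
Proof. by []. Qed.

Lemma Kl_term_half (R : realType) (k : nat) (n m : R) (h : nat) : (0 < k)%N ->
  Kl_term k 1 (n / 2%:R) (m / 2%:R) h = Kl_term k 2 n m h.
Proof.
move=> k_gt0; rewrite /Kl_term mul1n natrM; congr ee.
by field; rewrite pnatr_eq0 -lt0n.
Qed.

Lemma Kl_term_addn_self (R : realType) (k h : nat) (n m : int) :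
  (0 < k)%N -> ~~ odd k -> odd `|n|%N -> odd `|m|%N -> coprime h k ->
  Kl_term k 2 (n%:~R : R) m%:~R (h + k) = Kl_term k 2 (n%:~R : R) m%:~R h.
Proof.
move=> k_gt0 k_even /odd_absz_double[a ->] /odd_absz_double[b ->] hk.
have hk' : coprime (h + k) k by rewrite coprimeDl_self.
have := inverse_addn_self_mod k_even hk
  (dvdn_trans (dvdn_double_kstar k) (dvdn_kstar_hprime k_gt0 k_even hk))
  (dvdn_trans (dvdn_double_kstar k) (dvdn_kstar_hprime k_gt0 k_even hk')).
rewrite eqz_mod_dvd => /dvdzP[t] /eqP; rewrite subr_eq => /eqP.
move/(congr1 (fun z : int => z%:~R : R)).
rewrite /= !intrD intrM -!pmulrn => hprime_shift.
rewrite /Kl_term -[RHS](ee_addz _ (b - a + t * (2 * b + 1))) hprime_shift.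
congr ee; rewrite natrD !(intrD, intrB, intrM) /=.
by field; rewrite pnatr_eq0 -lt0n.
Qed.

Theorem lemma2p4 (R : realType) (k : nat) (n m : int) :
  ~~ odd k -> odd `|n|%N -> odd `|m|%N ->
  Kl k 2 (n%:~R : R) m%:~R = 2%:R * Kl k 1 ((n%:~R : R) / 2%:R) (m%:~R / 2%:R).
Proof.
move=> k_even n_odd m_odd.
have [->|k_gt0] := posnP k; first by rewrite /Kl !muln0 !big_geq ?mulr0.
rewrite !KlE mul1n.
rewrite (big_cat_nat (leq0n k)) ?leq_pmull //= (big_addn 0 (2 * k) k).
rewrite (_ : 2 * k - k = k)%N; last by lia.
have -> : \sum_(0 <= h < k | coprime (h + k) (2 * k))
    Kl_term k 2 (n%:~R : R) m%:~R (h + k) =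
    \sum_(0 <= h < k | coprime h (2 * k)) Kl_term k 2 (n%:~R : R) m%:~R h.
  apply: eq_big => h; rewrite !coprime_double_even // coprimeDl_self // => hk.
  exact: Kl_term_addn_self.
rewrite -mulr2n mulr_natl; congr (_ *+ 2); apply: eq_big => h.
  exact: coprime_double_even.
by rewrite Kl_term_half.
Qed.
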